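(* Let $\mathcal{L}=(n,\mathcal{M},\mathcal{C})$ be a simple linearization and let $\mathcal{T}\subseteq\mathcal{P}$. If $D(\mathcal{L})$ has a subgraph $Z$ whose underlying undirected graph is a cycle, whose node set is contained in $\mathrm{succ}(\mathcal{T})$, and which satisfies $|U(Z)|=1$, then $\mathrm{proj}_{\mathcal{S}\cup\mathcal{T}}(P(\mathcal{L}))$ is not integral.
   Context: $[n]=\{1,\dots,n\}$; a monomial is a nonempty subset of $[n]$; $\mathcal{S}=\{\{i\}:i\in[n]\}$. A linearization is a triple $\mathcal{L}=(n,\mathcal{M},\mathcal{C})$, where $\mathcal{M}$ is a set of monomials with $\mathcal{S}\subseteq\mathcal{M}$ and $\mathcal{C}$ is a set of AND-constraints; each AND-constraint is a set $c\subseteq\mathcal{M}$ whose union $\bigcup c$ (resultant) lies in $\mathcal{M}$. $\mathcal{P}=\mathcal{M}\setminus\mathcal{S}$. Linearizations are consistent: each $m\in\mathcal{P}$ is the resultant of some $c$ with $|m'|<|m|$ for all $m'\in c$. $\mathcal{L}$ is simple if each proper monomial is the resultant of exactly one AND-constraint and $|\mathcal{C}|=|\mathcal{P}|$. $P(\mathcal{L})\subseteq\mathbb{R}^{\mathcal{M}}$ is the set of $y$ with $0\le y_m\le1$ ($m\in\mathcal{M}$), $y_{\bigcup c}\le y_m$ ($c\in\mathcal{C}$, $m\in c$), $\sum_{m\in c}y_m\le y_{\bigcup c}+|c|-1$ ($c\in\mathcal{C}$). $D(\mathcal{L})$ has node set $\mathcal{M}$ and, for each $c\in\mathcal{C}$,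 arcs from $\bigcup c$ to each $m\in c$. Cycles are simple. $\mathrm{succ}(W)$ is the set of nodes reachable by directed paths from $W$, including $W$. $U(Z)$ is the set of nodes of out-degree at least $2$ in $Z$. $\mathrm{proj}_{\mathcal{M}'}$ is orthogonal projection onto coordinates in $\mathcal{M}'$. *)

From HB Require Import structures.
From mathcomp Require Import all_boot all_order all_algebra.
From mathcomp Require Import reals.
Set Implicit Arguments. Unset Strict Implicit. Unset Printing Implicit Defensive.
Import Order.TTheory GRing.Theory Num.Theory.
Local Open Scope ring_scope.

(* Variables [n] are represented by 'I_n; a monomial is a set of variables. *)
Notation monomial n := {set 'I_n}.

Definition singletons (n : nat) : {set monomial n} := [set [set i] | i : 'I_n].

Definition resultant (n : nat) (c : {set monomial n}) : monomial n :=
  \bigcup_(m in c) m.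

Definition proper_monos (n : nat) (M : {set monomial n}) : {set monomial n} :=
  M :\: singletons n.

Definition linearization (n : nat) (M : {set monomial n})
  (C : {set {set monomial n}}) : Prop :=
  [/\ (forall m, m \in M -> m != set0),
      singletons n \subset M,
      (forall c, c \in C -> c \subset M /\ resultant c \in M) &
      (forall m, m \in proper_monos M ->
         exists2 c, c \in C &
           resultant c = m /\ (forall m', m' \in c -> (#|m'| < #|m|)%N))].

Definition simple_linearization (n : nat) (M : {set monomial n})
  (C : {set {set monomial n}}) : Prop :=
  [/\ linearization M C,
      (forall m, m \in proper_monos M ->
         #|[set c in C | resultant c == m]| = 1%N) &
      #|C| = #|proper_monos M|].

(* A vector of R^K, for K a set of monomials, is encoded as a function on all
   monomials that vanishes outside K. *)
Definition supported_on (R : realType) (n : nat) (K : {set monomial n})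
  (y : monomial n -> R) : Prop := forall m, m \notin K -> y m = 0.

Definition PL (R : realType) (n : nat) (M : {set monomial n})
  (C : {set {set monomial n}}) (y : monomial n -> R) : Prop :=
  [/\ supported_on M y,
      (forall m, m \in M -> 0 <= y m <= 1),
      (forall c m, c \in C -> m \in c -> y (resultant c) <= y m) &
      (forall c, c \in C ->
         \sum_(m in c) y m <= y (resultant c) + (#|c|%:R - 1))].

Definition proj (R : realType) (n : nat) (K : {set monomial n})
  (Q : (monomial n -> R) -> Prop) (z : monomial n -> R) : Prop :=
  exists2 y, Q y & forall m, z m = if m \in K then y m else 0.

Definition extreme_point (R : realType) (n : nat)
  (Q : (monomial n -> R) -> Prop) (x : monomial n -> R) : Prop :=
  Q x /\ forall (y z : monomial n -> R) (t : R), Q y -> Q z -> 0 < t < 1 ->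
    (forall m, x m = t * y m + (1 - t) * z m) -> forall m, y m = z m.

Definition integral_polytope (R : realType) (n : nat)
  (Q : (monomial n -> R) -> Prop) : Prop :=
  forall x, extreme_point Q x -> forall m, exists k : int, x m = k%:~R.

Definition arcD (n : nat) (C : {set {set monomial n}}) : rel (monomial n) :=
  fun a b => [exists c in C, (a == resultant c) && (b \in c)].

Definition succ (n : nat) (C : {set {set monomial n}}) (W : {set monomial n})
  : {set monomial n} := [set v | [exists w in W, connect (arcD C) w v]].

Definition cycle_subgraph (n : nat) (M : {set monomial n})
  (C : {set {set monomial n}}) (VZ : {set monomial n})
  (AZ : {set monomial n * monomial n}) : Prop :=
  [/\ VZ \subset M,
      (forall a b, (a, b) \in AZ -> [/\ arcD C a b, a \in VZ & b \in VZ]),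
      (forall a b, (a, b) \in AZ -> (b, a) \notin AZ) &
      exists s : seq (monomial n),
        [/\ uniq s, (3 <= size s)%N, VZ = [set x in s] &
            forall a b, a \in s -> b \in s ->
              (((a, b) \in AZ) || ((b, a) \in AZ)) =
              ((next s a == b) || (next s b == a))]].

Definition Uset (n : nat) (VZ : {set monomial n})
  (AZ : {set monomial n * monomial n}) : {set monomial n} :=
  [set v in VZ | (2 <= #|[set w | (v, w) \in AZ]|)%N].

From HB Require Import structures.
From mathcomp Require Import all_boot all_order all_algebra.
From mathcomp Require Import reals.
From mathcomp Require Import zify ring lra.
Set Implicit Arguments. Unset Strict Implicit. Unset Printing Implicit Defensive.
Import Order.TTheory GRing.Theory Num.Theory.

(* Orient the cycle Z as in D(L).  Every node of Z has in-degree plus out-degree 2 and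
   the out-degrees sum to |Z|, so besides the unique node u of out-degree 2 there is a
   unique sink z, which both out-neighbours a, b of u reach; hence some variable j lies
   in z, a subset of a and of b.  Let d(m) be the exponent of x_j in m fully expanded
   along its defining AND-constraints.  Then d(u) >= d(a) + d(b) >= 2, so D := d(t) >= 2
   for some t in T above u.  The point x(m) = max(0, 1 - d(m)/D) lies in P(L).  Every
   y in P(L) with y({i}) = 1 for i <> j satisfies y(m) >= 1 - d(m) (1 - y({j})); if also
   y(t) = 0 this gives y({j}) <= 1 - 1/D = x({j}), and equality gives y >= x.  Since x
   attains the bounds 1 at {i}, i <> j, and 0 at t, its projection onto S u T is a
   vertex, with the fractional coordinate 1 - 1/D. *)

Lemma next_neq_prev (T : eqType) (s : seq T) (v : T) :
  uniq s -> (3 <= size s)%N -> v \in s -> next s v != v /\ next s v != prev s v.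
Proof.
move=> s_uniq s_size vS; have [i s' s_rot] := rot_to vS.
have [nv nnv] : next s v != v /\ next s (next s v) != v.
  rewrite -!(next_rot i s_uniq) s_rot.
  have : uniq (v :: s') by rewrite -s_rot rot_uniq.
  have : (3 <= size (v :: s'))%N by rewrite -s_rot size_rot.
  case: s' {s_rot} => [|x1 [|x2 r]] //= _.
  rewrite !inE !negb_or => /and3P [/and3P [vx1 vx2 _] /andP [x1x2 _] _].
  by rewrite eqxx !(eq_sym _ v) (negbTE vx1) eqxx.
by split=> //; apply: contra nnv => /eqP ->; rewrite next_prev.
Qed.

Lemma connect_to_sink (T : finType) (e : rel T) (f : T -> nat) (A : {pred T}) :
  (forall a b, e a b -> f b < f a) -> (forall a b, a \in A -> e a b -> b \in A) ->
  forall x, x \in A -> exists z, [/\ z \in A, connect e x z & forall w, ~~ e z w].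
Proof.
move=> e_rank A_closed x; have [k fx] : exists k, f x = k by exists (f x).
elim/ltn_ind: k x fx => k IH x fx xA.
case: (pickP (e x)) => [y xy | x_sink]; last first.
  by exists x; split=> // w; rewrite x_sink.
have [|z [zA yz z_sink]] := IH (f y) _ y erefl (A_closed _ _ xA xy).
  by rewrite -fx; exact: e_rank.
by exists z; split=> //; apply: connect_trans yz; exact: connect1.
Qed.

Lemma connect_rev_homo (T : finType) (e r : rel T) :
  reflexive r -> transitive r -> (forall a b, e a b -> r b a) ->
  forall a b, connect e a b -> r b a.
Proof.
move=> r_refl r_trans e_r a b /connectP [p e_p ->] {b}.
elim: p a e_p => //= b p IH a /andP [ab e_p].
exact: r_trans (IH b e_p) (e_r _ _ ab).
Qed.

Definition outdeg (V : finType) (A : {set V * V}) (v : V) := #|[set w | (v, w) \in A]|.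
Definition indeg (V : finType) (A : {set V * V}) (v : V) := #|[set w | (w, v) \in A]|.

Lemma card_set_sum (V : finType) (P : pred V) : #|[set v | P v]| = \sum_v (P v : nat).
Proof. by rewrite -sum1dep_card big_mkcond; apply: eq_bigr => v _; case: (P v). Qed.

Lemma sum_outdeg_indeg (V : finType) (A : {set V * V}) :
  \sum_v outdeg A v = \sum_v indeg A v.
Proof.
rewrite (eq_bigr (fun v => \sum_w ((v, w) \in A : nat))); last first.
  by move=> v _; rewrite /outdeg card_set_sum.
by rewrite exchange_big; apply: eq_bigr => v _; rewrite /indeg card_set_sum.
Qed.

Section OrientedCycle.
Variables (V : finType) (VZ : {set V}) (AZ : {set V * V}) (s : seq V).
Hypothesis arc_in : forall a b, (a, b) \in AZ -> a \in VZ /\ b \in VZ.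
Hypothesis arc_asym : forall a b, (a, b) \in AZ -> (b, a) \notin AZ.
Hypotheses (s_uniq : uniq s) (s_size : (3 <= size s)%N) (VZ_s : VZ = [set x in s]).
Hypothesis arc_next : forall a b, a \in s -> b \in s ->
  ((a, b) \in AZ) || ((b, a) \in AZ) = (next s a == b) || (next s b == a).

Local Notation arc := (fun a b => (a, b) \in AZ).

Lemma cycle_arc_neq a b : (a, b) \in AZ -> a != b.
Proof.
move=> ab; have [aV _] := arc_in ab; have aS : a \in s by rewrite VZ_s inE in aV.
apply: contraTneq ab => <-; have [/negbTE nv _] := next_neq_prev s_uniq s_size aS.
by apply/negP => aa; move: (arc_next aS aS); rewrite aa nv.
Qed.

Lemma outdeg_notin v : v \notin VZ -> outdeg AZ v = 0.
Proof.
move=> vV; apply/eqP; rewrite cards_eq0; apply/eqP/setP => w; rewrite !inE.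
by apply/negP => /arc_in [] /[!(negbTE vV)].
Qed.

Lemma indeg_notin v : v \notin VZ -> indeg AZ v = 0.
Proof.
move=> vV; apply/eqP; rewrite cards_eq0; apply/eqP/setP => w; rewrite !inE.
by apply/negP => /arc_in [] _ /[!(negbTE vV)].
Qed.

Lemma cycle_degree v : v \in VZ -> outdeg AZ v + indeg AZ v = 2.
Proof.
move=> vV; have vS : v \in s by rewrite VZ_s inE in vV.
have [_ next_prev_neq] := next_neq_prev s_uniq s_size vS.
have nbrs : [set w | (v, w) \in AZ] :|: [set w | (w, v) \in AZ] = [set next s v; prev s v].
  apply/setP => w; rewrite !inE; case wS: (w \in s).
    rewrite arc_next // (eq_sym w); congr (_ || _).
    by apply/eqP/eqP => [<-|->]; [rewrite prev_next | rewrite next_prev].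
  have [-> ->] : (v, w) \in AZ = false /\ (w, v) \in AZ = false.
    by split; apply/negbTE/negP => /arc_in; rewrite VZ_s !inE wS => -[].
  by apply/esym/negbTE; apply: contraFN wS => /orP [] /eqP ->;
    rewrite ?mem_next ?mem_prev.
have disj : [set w | (v, w) \in AZ] :&: [set w | (w, v) \in AZ] = set0.
  by apply/setP => w; rewrite !inE; apply/negP => /andP [/arc_asym/negP].
by rewrite /outdeg /indeg -cardsUI nbrs disj cards0 addn0 cards2 next_prev_neq.
Qed.

Lemma cycle_outdeg_sum : \sum_(v in VZ) outdeg AZ v = #|VZ|.
Proof.
have sum_VZ F : (forall v, v \notin VZ -> F v = 0) -> \sum_v F v = \sum_(v in VZ) F v.
  by move=> F0; rewrite [RHS]big_mkcond; apply: eq_bigr => v _; case: ifPn => // /F0.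
have := sum_outdeg_indeg AZ; rewrite !sum_VZ; [|exact: indeg_notin|exact: outdeg_notin].
have : \sum_(v in VZ) (outdeg AZ v + indeg AZ v) = #|VZ| * 2.
  by rewrite -sum_nat_const; apply: eq_bigr => v; exact: cycle_degree.
rewrite big_split /=; lia.
Qed.

Lemma cycle_unique_sink :
  #|[set v in VZ | (2 <= outdeg AZ v)%N]| = 1 ->
  #|[set v in VZ | outdeg AZ v == 0]| = 1.
Proof.
move=> /eqP /cards1P [u U_u].
have uU : u \in [set v in VZ | (2 <= outdeg AZ v)%N] by rewrite U_u set11.
have [uV u2] : u \in VZ /\ (2 <= outdeg AZ u)%N by apply/andP; rewrite inE in uU.
have deg v : v \in VZ -> outdeg AZ v + (outdeg AZ v == 0) = 1 + (v == u).
  move=> vV; have := cycle_degree vV; case: (v =P u) => [-> | vu]; first lia.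
  have : (outdeg AZ v < 2)%N.
    rewrite ltnNge; apply/negP => v2; apply: vu.
    by apply/set1P; rewrite -U_u inE vV.
  lia.
have sumE (P : pred V) : \sum_(v in VZ) (P v : nat) = #|[set v in VZ | P v]|.
  by rewrite card_set_sum big_mkcond; apply: eq_bigr => v _; case: (v \in VZ).
have : \sum_(v in VZ) (outdeg AZ v + (outdeg AZ v == 0)) = \sum_(v in VZ) (1 + (v == u)).
  exact: eq_bigr.
rewrite !big_split /= cycle_outdeg_sum sum_nat_const muln1 !sumE => /addnI ->.
by apply/eqP/cards1P; exists u; apply/setP => v; rewrite !inE andb_idl // => /eqP ->.
Qed.

Lemma cycle_fork_to_sink (f : V -> nat) :
  (forall a b, (a, b) \in AZ -> f b < f a) ->
  #|[set v in VZ | (2 <= outdeg AZ v)%N]| = 1 ->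
  exists u a b z, [/\ (u, a) \in AZ, (u, b) \in AZ & a != b] /\
    [/\ z \in VZ, connect arc a z & connect arc b z].
Proof.
move=> arc_rank U1; have /eqP /cards1P [z sinks] := cycle_unique_sink U1.
have zV : z \in VZ by have := set11 z; rewrite -sinks inE => /andP [].
have to_sink x : x \in VZ -> connect arc x z.
  move=> xV; have closed a b : a \in VZ -> (a, b) \in AZ -> b \in VZ.
    by move=> _ /arc_in [].
  have [z' [z'V xz' z'_sink]] := connect_to_sink arc_rank closed xV.
  suff <- : z' = z by [].
  apply/set1P; rewrite -sinks inE z'V cards_eq0; apply/eqP/setP => w.
  by rewrite !inE; exact/negbTE/z'_sink.
have [u] : exists u, u \in [set v in VZ | (2 <= outdeg AZ v)%N].
  by apply/set0Pn; rewrite -card_gt0 U1.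
rewrite inE => /andP [_ /card_gt1P [a [b [ua ub ab]]]]; rewrite !inE in ua ub.
exists u, a, b, z; split; split=> //; apply: to_sink.
  exact: (arc_in ua).2.
exact: (arc_in ub).2.
Qed.

End OrientedCycle.

Section Ramp.
Variable R : realDomainType.
Local Open Scope ring_scope.
Implicit Types r s : R.

Definition ramp r : R := Num.max 0 (1 - r).

Lemma ramp_ge0 r : 0 <= ramp r.
Proof. by rewrite le_max lexx. Qed.

Lemma ramp_le r s : 0 <= s -> 1 - r <= s -> ramp r <= s.
Proof. by rewrite ge_max => -> ->. Qed.

Lemma ramp_le1 r : 0 <= r -> ramp r <= 1.
Proof. by move=> r0; apply: ramp_le; lra. Qed.

Lemma ramp_id r : r <= 1 -> ramp r = 1 - r.
Proof. by move=> r1; apply/max_idPr; lra. Qed.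

Lemma ramp_eq0 r : 1 <= r -> ramp r = 0.
Proof. by move=> r1; apply/max_idPl; lra. Qed.

Lemma ramp_nonincreasing r s : r <= s -> ramp s <= ramp r.
Proof.
by move=> rs; apply: ramp_le; rewrite ?ramp_ge0 // le_max; apply/orP; right; lra.
Qed.

Lemma ramp_sum (I : Type) (l : seq I) (F : I -> R) : (forall i, 0 <= F i) ->
  \sum_(i <- l) ramp (F i) <= ramp (\sum_(i <- l) F i) + (size l)%:R - 1.
Proof.
move=> F_ge0; elim: l => [|i l IH]; first by rewrite !big_nil ramp_id /= ?ler01 //; lra.
rewrite !big_cons /= -addn1 natrD; set S := \sum_(k <- l) F k.
have S_ge0 : 0 <= S by apply: sumr_ge0.
have : ramp (F i) + ramp S <= ramp (F i + S) + 1.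
  have Fi_ge0 := F_ge0 i; rewrite /ramp !maxEle.
  by case: (leP 0 (1 - F i)) => ?; case: (leP 0 (1 - S)) => ?;
    case: (leP 0 (1 - (F i + S))) => ?; lra.
lra.
Qed.

Lemma convex_comb_ge_eq (a b v t : R) : v <= a -> v <= b -> 0 < t < 1 ->
  v = t * a + (1 - t) * b -> a = v /\ b = v.
Proof.
move=> va vb /andP [t0 t1] e.
have : t * (a - v) + (1 - t) * (b - v) = 0 by rewrite e; ring.
have : 0 <= t * (a - v) by apply: mulr_ge0; lra.
have : 0 <= (1 - t) * (b - v) by apply: mulr_ge0; lra.
nra.
Qed.

Lemma convex_comb_le_eq (a b v t : R) : a <= v -> b <= v -> 0 < t < 1 ->
  v = t * a + (1 - t) * b -> a = v /\ b = v.
Proof.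
move=> av bv t01 e; have [] := @convex_comb_ge_eq (- a) (- b) (- v) t.
all: lra.
Qed.
End Ramp.

Lemma not_integral_of_fractional_extreme (R : realType) (n : nat)
  (Q : (monomial n -> R) -> Prop) (x : monomial n -> R) (m : monomial n) :
  extreme_point Q x -> (0 < x m < 1)%R -> ~ integral_polytope Q.
Proof.
move=> x_extreme x_frac integral; have [k xk] := integral x x_extreme m.
by move: x_frac; rewrite xk ltr0z ltrz1; case: k {xk} => [[|k]|k].
Qed.

Lemma card_le_ord (n : nat) (A : {set 'I_n}) : #|A| <= n.
Proof. by rewrite -[leqRHS](card_ord n) max_card. Qed.

Lemma nonproper_singleton (n : nat) (M : {set monomial n}) m :
  m \in M -> m \notin proper_monos M -> exists i, m = [set i].
Proof. by move=> mM; rewrite inE mM andbT negbK => /imsetP [i _ ->]; exists i. Qed.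

Definition defining_constraint (n : nat) (C : {set {set monomial n}}) (m : monomial n) :=
  odflt set0 [pick c in C | resultant c == m].

Section SimpleLinearization.
Variables (n : nat) (M : {set monomial n}) (C : {set {set monomial n}}).
Hypothesis HL : simple_linearization M C.
Local Notation P := (proper_monos M).

Lemma mono_neq0 m : m \in M -> m != set0.
Proof. by case: HL => -[nonempty _ _ _] _ _ /nonempty. Qed.

Lemma singletons_sub : singletons n \subset M.
Proof. by case: HL => -[]. Qed.

Lemma constraint_sub c : c \in C -> c \subset M.
Proof. by case: HL => -[_ _ HC _] _ _ /HC []. Qed.

Lemma resultant_in c : c \in C -> resultant c \in M.
Proof. by case: HL => -[_ _ HC _] _ _ /HC []. Qed.

Lemma proper_mono_consistent m : m \in P ->
  exists2 c, c \in C & resultant c = m /\ (forall m', m' \in c -> #|m'| < #|m|).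
Proof. by case: HL => -[_ _ _ Hcons] _ _ /Hcons. Qed.

Lemma resultant_inj_proper c1 c2 : c1 \in C -> c2 \in C ->
  resultant c1 \in P -> resultant c1 = resultant c2 -> c1 = c2.
Proof.
move=> c1C c2C r1P r12; have [_ Hone _] := HL.
have /eqP /cards1P [c Ec] := Hone _ r1P.
have /set1P -> : c1 \in [set c]%SET by rewrite -Ec inE c1C /=.
by apply/esym/set1P; rewrite -Ec inE c2C r12 /=.
Qed.

(* By |C| = |P| and uniqueness, [resultant] maps C bijectively onto P. *)
Lemma resultant_proper c : c \in C -> resultant c \in P.
Proof.
have [_ _ card_CP] := HL.
pose C' := [set c in C | resultant c \in P].
have inj : {in C' &, injective (@resultant n)}.
  move=> c1 c2 /setIdP [c1C r1P] /setIdP [c2C _].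
  exact: resultant_inj_proper.
have img : [set resultant c | c in C'] = P.
  apply/eqP; rewrite eqEsubset; apply/andP; split; apply/subsetP => m.
    by case/imsetP => d /setIdP [_ rP] ->.
  move=> mP; have [d dC [rd _]] := proper_mono_consistent mP.
  by apply/imsetP; exists d; rewrite // inE dC rd mP.
have /eqP <- : C' == C.
  rewrite eqEcard card_CP -img card_in_imset // leqnn andbT.
  by apply/subsetP => ? /setIdP [].
by case/setIdP.
Qed.

Lemma resultant_inj : {in C &, injective (@resultant n)}.
Proof.
by move=> c1 c2 c1C c2C; apply: resultant_inj_proper => //; exact: resultant_proper.
Qed.

Lemma proper_resultant m : m \in P -> exists2 c, c \in C & resultant c = m.
Proof. by case/proper_mono_consistent => c cC [rc _]; exists c. Qed.

Lemma defining_constraint_resultant c : c \in C -> defining_constraint C (resultant c) = c.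
Proof.
move=> cC; rewrite /defining_constraint; case: pickP => [d /andP [dC /eqP] | none] /=.
  exact: resultant_inj.
by move: (none c); rewrite cC eqxx.
Qed.

Lemma resultant_card_lt c m : c \in C -> m \in c -> #|m| < #|resultant c|.
Proof.
move=> cC mc; have [d dC [rd small]] := proper_mono_consistent (resultant_proper cC).
by apply: small; rewrite (resultant_inj dC cC rd).
Qed.

Lemma constraint_mono c m : c \in C -> m \in c -> m \in M.
Proof. by move=> /constraint_sub /subsetP; apply. Qed.

Lemma arcD_sub a b : arcD C a b -> b \subset a.
Proof. by case/existsP => c /and3P [_ /eqP -> bc]; exact: bigcup_sup. Qed.

Lemma connect_arcD_sub a b : connect (arcD C) a b -> b \subset a.
Proof.
apply: (connect_rev_homo (r := fun x y : monomial n => x \subset y)) => //.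
  by move=> x y z; exact: subset_trans.
exact: arcD_sub.
Qed.

Section ExpandedDegree.
Variable j : 'I_n.

Fixpoint expanded_degree_rec (k : nat) (m : monomial n) : nat :=
  if k is k'.+1 then
    if m \in P then \sum_(m' in defining_constraint C m) expanded_degree_rec k' m'
    else m == [set j]
  else m == [set j].

(* The exponent of x_j in the product of variables, with repetitions, obtained by
   expanding m recursively along its defining constraints; the fuel [n] bounds the
   recursion depth since constraint elements are strictly smaller. *)
Definition expanded_degree (m : monomial n) : nat := expanded_degree_rec n m.

Lemma expanded_degree_rec_stable k k' m : m \in M -> #|m| <= k -> #|m| <= k' ->
  expanded_degree_rec k m = expanded_degree_rec k' m.
Proof.
elim: k k' m => [|k IH] [|k'] m mM;
  rewrite ?leqn0 ?cards_eq0 ?(negbTE (mono_neq0 mM)) //= => mk mk'.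
case: ifP => // mP; have [c cC rc] := proper_resultant mP.
rewrite -rc defining_constraint_resultant //; apply: eq_bigr => m' m'c.
have m'_lt := resultant_card_lt cC m'c; rewrite rc in m'_lt.
by apply: IH; rewrite ?(constraint_mono cC m'c) // -ltnS (leq_trans m'_lt).
Qed.

Lemma expanded_degree_nonproper m : m \notin P -> expanded_degree m = (m == [set j]).
Proof.
move=> /negbTE mP; have rec_nonproper k : expanded_degree_rec k m = (m == [set j]).
  by case: k => //= k; rewrite mP.
exact: rec_nonproper.
Qed.

Lemma expanded_degree_resultant c : c \in C ->
  expanded_degree (resultant c) = \sum_(m in c) expanded_degree m.
Proof.
move=> cC; have rc_gt0 : 0 < #|resultant c| by rewrite card_gt0 mono_neq0 ?resultant_in.
rewrite /expanded_degree (@expanded_degree_rec_stable n #|resultant c|) ?card_le_ord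
  ?resultant_in // -(prednK rc_gt0) /= resultant_proper // defining_constraint_resultant //.
apply: eq_bigr => m mc; apply: expanded_degree_rec_stable; rewrite ?card_le_ord //.
  exact: constraint_mono mc.
by rewrite -ltnS prednK ?resultant_card_lt.
Qed.

Lemma expanded_degree_arc a b : arcD C a b -> expanded_degree b <= expanded_degree a.
Proof.
case/existsP => c /and3P [cC /eqP -> bc].
by rewrite expanded_degree_resultant // (bigD1 b) //= leq_addr.
Qed.

Lemma expanded_degree_connect a b : connect (arcD C) a b ->
  expanded_degree b <= expanded_degree a.
Proof.
apply: (connect_rev_homo (r := fun x y => expanded_degree x <= expanded_degree y)) => //.
- by move=> x y z; exact: leq_trans.
- exact: expanded_degree_arc.
Qed.

Lemma expanded_degree_gt0 m : m \in M -> j \in m -> 0 < expanded_degree m.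
Proof.
have [k mk] : exists k, #|m| = k by exists #|m|.
elim/ltn_ind: k m mk => k IH m mk mM jm; case mP: (m \in P); last first.
  have [i mi] := nonproper_singleton mM (negbT mP).
  rewrite expanded_degree_nonproper ?mP // mi.
  by move: jm; rewrite mi inE => /eqP ->; rewrite eqxx.
have [c cC rc] := proper_resultant mP.
move: jm; rewrite -rc => /bigcupP [m' m'c jm'].
rewrite expanded_degree_resultant // (bigD1 m') //= (leq_trans _ (leq_addr _ _)) //.
by apply: (IH #|m'|) (constraint_mono cC m'c) jm'; rewrite // -mk -rc resultant_card_lt.
Qed.

Lemma expanded_degree_fork u a b : arcD C u a -> arcD C u b -> a != b ->
  expanded_degree a + expanded_degree b <= expanded_degree u.
Proof.
case/existsP => c /and3P [cC /eqP -> ac] /existsP [c' /and3P [c'C /eqP rc bc]] ab.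
have {}bc : b \in c by rewrite (resultant_inj cC c'C rc).
rewrite expanded_degree_resultant // (bigD1 a) //= (bigD1 b) /=; last by rewrite bc eq_sym.
by rewrite addnA leq_addr.
Qed.

Section PointsOfPL.
Variable R : realType.
Local Open Scope ring_scope.

Lemma PL_expanded_degree_lbound (Y : monomial n -> R) :
  PL M C Y -> (forall i, i != j -> Y [set i] = 1) ->
  forall m, m \in M -> 1 - (expanded_degree m)%:R * (1 - Y [set j]) <= Y m.
Proof.
move=> [_ Y01 _ Y_constraint] Y1 m; have [k mk] : exists k, #|m| = k by exists #|m|.
elim/ltn_ind: k m mk => k IH m mk mM; case mP: (m \in P); last first.
  have [i mi] := nonproper_singleton mM (negbT mP).
  rewrite expanded_degree_nonproper ?mP // mi (inj_eq set1_inj).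
  have := Y01 _ mM; rewrite mi; case: (i =P j) => [-> | /eqP ij] /=.
    by rewrite mul1r; lra.
  by rewrite mul0r subr0 Y1 //; lra.
have [c cC rc] := proper_resultant mP.
have IHc : \sum_(m' in c) (1 - (expanded_degree m')%:R * (1 - Y [set j]))
            <= \sum_(m' in c) Y m'.
  apply: ler_sum => m' m'c; apply: (IH #|m'|) (constraint_mono cC m'c) => //.
  by rewrite -mk -rc resultant_card_lt.
have := Y_constraint _ cC; move: IHc.
rewrite -rc expanded_degree_resultant // sumrB sumr_const natr_sum mulr_suml.
lra.
Qed.

Definition ramp_point (D : nat) (m : monomial n) : R :=
  if m \in M then ramp ((expanded_degree m)%:R / D%:R) else 0.

Lemma ramp_point_PL D : PL M C (ramp_point D).
Proof.
have arg_ge0 k : 0 <= k%:R / D%:R :> R by rewrite divr_ge0.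
split.
- by move=> m /negbTE mM; rewrite /ramp_point mM.
- by move=> m mM; rewrite /ramp_point mM ramp_ge0 ramp_le1.
- move=> c m cC mc; rewrite /ramp_point resultant_in // (constraint_mono cC mc).
  apply: ramp_nonincreasing; rewrite ler_wpM2r ?invr_ge0 // ler_nat.
  by rewrite expanded_degree_resultant // (bigD1 m) //= leq_addr.
- move=> c cC; rewrite /ramp_point resultant_in // expanded_degree_resultant //.
  rewrite (eq_bigr (fun m => ramp ((expanded_degree m)%:R / D%:R))); last first.
    by move=> m mc; rewrite (constraint_mono cC mc).
  have := ramp_sum (enum c) (fun m => arg_ge0 (expanded_degree m)).
  rewrite !big_enum /= -cardE natr_sum mulr_suml; lra.
Qed.

Section ExtremePoint.
Variables (K : {set monomial n}) (t : monomial n).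
Hypotheses (SK : singletons n \subset K) (KM : K \subset M) (tK : t \in K).
Hypothesis deg_t_gt0 : (0 < expanded_degree t)%N.
Local Notation D := (expanded_degree t)%:R.
Local Notation x := (ramp_point (expanded_degree t)).

Let D_gt0 : 0 < D :> R. Proof. by rewrite ltr0n. Qed.

Lemma ramp_point_singleton i : x [set i] = if i == j then 1 - D^-1 else 1.
Proof.
have iS : [set i] \in singletons n by exact: imset_f.
rewrite /ramp_point (subsetP singletons_sub _ iS) expanded_degree_nonproper;
  last by rewrite inE iS.
rewrite (inj_eq set1_inj); case: eqP => _ /=.
  by rewrite mul1r ramp_id // invf_le1 // ler1n.
by rewrite mul0r ramp_id //; lra.
Qed.

Lemma ramp_point_singleton_fractional : (1 < expanded_degree t)%N -> 0 < x [set j] < 1.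
Proof.
move=> deg_t_gt1; rewrite ramp_point_singleton eqxx.
have Dinv_gt0 : 0 < D^-1 :> R by rewrite invr_gt0.
have Dinv_lt1 : D^-1 < 1 :> R by rewrite invf_lt1 // ltr1n.
by apply/andP; split; lra.
Qed.

Lemma ramp_point_t : x t = 0.
Proof. by rewrite /ramp_point (subsetP KM _ tK) mulfV ?ramp_eq0 ?gt_eqF. Qed.

Lemma PL_face_singleton_le (W : monomial n -> R) :
  PL M C W -> (forall i, i != j -> W [set i] = 1) -> W t = 0 -> W [set j] <= 1 - D^-1.
Proof.
move=> PW W1 Wt; have := PL_expanded_degree_lbound PW W1 (subsetP KM _ tK).
rewrite Wt => lb.
have : D^-1 * 1 <= D^-1 * (D * (1 - W [set j])).
  by apply: ler_wpM2l; [rewrite invr_ge0 (ltW D_gt0) | lra].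
by rewrite mulKf ?gt_eqF // mulr1; lra.
Qed.

Lemma PL_face_ge_ramp_point (W : monomial n -> R) :
  PL M C W -> (forall i, i != j -> W [set i] = 1) -> W [set j] = 1 - D^-1 ->
  forall m, m \in M -> x m <= W m.
Proof.
move=> PW W1 Wj m mM; have [_ W01 _ _] := PW.
have := PL_expanded_degree_lbound PW W1 mM; rewrite Wj subKr /ramp_point mM => lb.
by apply: ramp_le; first by case/andP: (W01 _ mM).
Qed.

Lemma ramp_point_proj_extreme :
  extreme_point (proj K (PL M C)) (fun m => if m \in K then x m else 0).
Proof.
split; first by exists x => //; exact: ramp_point_PL.
move=> Y' Z' s [Y PY Y'E] [Z PZ Z'E] s01 x_conv m; rewrite Y'E Z'E.
case: ifP => // mK.
have conv m' : m' \in K -> x m' = s * Y m' + (1 - s) * Z m'.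
  by move=> m'K; have := x_conv m'; rewrite Y'E Z'E m'K.
have [[_ Y01 _ _] [_ Z01 _ _]] := (PY, PZ).
have KM' := subsetP KM; have iK i : [set i] \in K by apply: (subsetP SK); exact: imset_f.
have YZ1 i : i != j -> Y [set i] = 1 /\ Z [set i] = 1.
  move=> ij; have := conv _ (iK i); rewrite ramp_point_singleton (negbTE ij).
  have /andP [_ Y_le1] := Y01 _ (KM' _ (iK i)).
  have /andP [_ Z_le1] := Z01 _ (KM' _ (iK i)).
  exact: convex_comb_le_eq.
have [Yt Zt] : Y t = 0 /\ Z t = 0.
  have := conv _ tK; rewrite ramp_point_t.
  have /andP [Y_ge0 _] := Y01 _ (KM' _ tK); have /andP [Z_ge0 _] := Z01 _ (KM' _ tK).
  exact: convex_comb_ge_eq.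
have Y1 i ij := (YZ1 i ij).1; have Z1 i ij := (YZ1 i ij).2.
have [Yj Zj] : Y [set j] = 1 - D^-1 /\ Z [set j] = 1 - D^-1.
  have := conv _ (iK j); rewrite ramp_point_singleton eqxx.
  exact: convex_comb_le_eq (PL_face_singleton_le PY Y1 Yt)
                           (PL_face_singleton_le PZ Z1 Zt) s01.
have [-> ->] := convex_comb_ge_eq (PL_face_ge_ramp_point PY Y1 Yj (KM' _ mK))
                                 (PL_face_ge_ramp_point PZ Z1 Zj (KM' _ mK)) s01 (conv _ mK).
by [].
Qed.

End ExtremePoint.
End PointsOfPL.
End ExpandedDegree.
End SimpleLinearization.

Theorem lemma3p13 (R : realType) (n : nat) (M : {set {set 'I_n}})
  (C : {set {set {set 'I_n}}}) (T : {set {set 'I_n}})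
  (VZ : {set {set 'I_n}}) (AZ : {set {set 'I_n} * {set 'I_n}}) :
  simple_linearization M C ->
  T \subset proper_monos M ->
  cycle_subgraph M C VZ AZ ->
  VZ \subset succ C T ->
  #|Uset VZ AZ| = 1%N ->
  ~ integral_polytope (proj (singletons n :|: T) (@PL R n M C)).
Proof.
move=> HL TP [VZM arcZ asymZ [s [s_uniq s_size VZ_s adjZ]]] VZ_succ U1.
have arcZ_in a b : (a, b) \in AZ -> a \in VZ /\ b \in VZ by case/arcZ.
have arcZ_card a b : (a, b) \in AZ -> (#|b| < #|a|)%N.
  move=> ab; have [abD _ _] := arcZ _ _ ab; apply: proper_card.
  rewrite properEneq (arcD_sub abD) andbT eq_sym.
  exact: (cycle_arc_neq arcZ_in s_uniq s_size VZ_s adjZ ab).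
have [u [a [b [z [[ua ub ab] [zV az bz]]]]]] :=
  cycle_fork_to_sink arcZ_in asymZ s_uniq s_size VZ_s adjZ arcZ_card U1.
have arcZ_arcD : subrel (fun x y => (x, y) \in AZ) (connect (arcD C)).
  by move=> x y /arcZ [xy _ _]; exact: connect1.
have path_sub x y : connect (fun x y => (x, y) \in AZ) x y -> y \subset x.
  by move/(connect_sub arcZ_arcD)/connect_arcD_sub.
have [j jz] : exists j, j \in z by apply/set0Pn; exact: (mono_neq0 HL (subsetP VZM _ zV)).
have [ja jb] := (subsetP (path_sub _ _ az) _ jz, subsetP (path_sub _ _ bz) _ jz).
have [t tT tu] : exists2 t, t \in T & connect (arcD C) t u.
  by apply/exists_inP; have := subsetP VZ_succ u (arcZ_in _ _ ua).1; rewrite inE.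
have [[uaD _ aV] [ubD _ bV]] := (arcZ _ _ ua, arcZ _ _ ub).
have deg_t : (1 < expanded_degree M C j t)%N.
  apply: leq_trans (expanded_degree_connect HL j tu).
  apply: leq_trans (expanded_degree_fork HL j uaD ubD ab).
  exact: leq_add (expanded_degree_gt0 HL (subsetP VZM _ aV) ja)
                 (expanded_degree_gt0 HL (subsetP VZM _ bV) jb).
have KM : singletons n :|: T \subset M.
  by rewrite subUset (singletons_sub HL) (subset_trans TP) ?subsetDl.
have tK : t \in singletons n :|: T by rewrite inE tT orbT.
apply: (not_integral_of_fractional_extreme
  (ramp_point_proj_extreme HL R (subsetUl _ _) KM tK (ltnW deg_t)) (m := [set j])).
rewrite inE imset_f //=.
by apply: (ramp_point_singleton_fractional HL) => //; exact: ltnW.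
Qed.
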